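(* Let $b,d>0$ and $c\in\mathbb{R}$, and define $P_5:\mathbb{R}^{3\times3}\to\mathbb{R}$ by $P_5(R)=\sqrt{(\|R^TR-I\|_F+c)^2+b}$. On the open set $U=\{R:\|R^TR-I\|_F>d\}$, $P_5$ is twice differentiable with locally Lipschitz second derivatives, and there is a constant $L$ such that $-LI\preceq\nabla^2P_5(R)\preceq LI$ for all $R\in U$.
   Context: $\|\cdot\|_F$ is the Frobenius norm; $R$ is identified with a vector in $\mathbb{R}^9$. *)

From HB Require Import structures.
From mathcomp Require Import all_boot all_order all_algebra.
From mathcomp Require Import all_classical all_reals all_analysis.
Set Implicit Arguments. Unset Strict Implicit. Unset Printing Implicit Defensive.
Import Order.TTheory GRing.Theory Num.Theory.
Import numFieldNormedType.Exports.
Local Open Scope classical_set_scope.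
Local Open Scope ring_scope.

Definition frob {K : realType} {m n : nat} (A : 'M[K]_(m, n)) : K :=
  Num.sqrt (\sum_(i < m) \sum_(j < n) A i j ^+ 2).

Definition P5 {K : realType} (b c : K) (X : 'M[K]_3) : K :=
  Num.sqrt ((frob (X^T *m X - 1%:M) + c) ^+ 2 + b).

Definition Uset {K : realType} (d : K) : set 'M[K]_3 :=
  [set X | d < frob (X^T *m X - 1%:M)].

(* Identification of 'M_3 with R^9: k-th standard basis matrix. *)
Definition ebasis {K : realType} (k : 'I_(3 * 3)) : 'M[K]_3 :=
  vec_mx (delta_mx 0 k).

(* f : R^{3x3} -> R is twice (Frechet) differentiable at every point of U:
   f is differentiable there, and so is each partial derivative
   (equivalently, the derivative map Df is differentiable). *)
Definition twice_differentiable_on {K : realType} (U : set 'M[K]_3)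
    (f : 'M[K]_3 -> K) : Prop :=
  forall X, U X ->
    differentiable f X /\
    forall k : 'I_(3 * 3), differentiable (fun Y => 'D_(ebasis k) f Y) X.

Definition hessian {K : realType} (f : 'M[K]_3 -> K) (X : 'M[K]_3)
    : 'M[K]_(3 * 3) :=
  \matrix_(i, j) 'D_(ebasis i) (fun Y => 'D_(ebasis j) f Y) X.

Definition hessian_locally_lipschitz_on {K : realType} (U : set 'M[K]_3)
    (f : 'M[K]_3 -> K) : Prop :=
  forall X, U X -> exists r : K, exists Lc : K, 0 < r /\
    forall Y Z, U Y -> U Z -> frob (Y - X) < r -> frob (Z - X) < r ->
      frob (hessian f Y - hessian f Z) <= Lc * frob (Y - Z).

Definition psd {K : realType} {n : nat} (A : 'M[K]_n) : Prop :=
  forall v : 'rV[K]_n, 0 <= (v *m A *m v^T) 0 0.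

Definition loewner_le {K : realType} {n : nat} (A B : 'M[K]_n) : Prop :=
  psd (B - A).

From HB Require Import structures.
From mathcomp Require Import all_boot all_order all_algebra.
From mathcomp Require Import all_classical all_reals all_analysis.
From mathcomp Require Import ring lra.
Import Order.TTheory GRing.Theory Num.Theory.
Import numFieldNormedType.Exports.
Local Open Scope classical_set_scope.
Local Open Scope ring_scope.

(* Write P5 = psi o s with psi t = sqrt ((t + c)^2 + b) and s R = |E R|_F, where
   E R = R^T R - I.  On U we have s >= d > 0, so s = sqrt <E, E> is smooth there, with
   directional derivatives s_v = <E, E'_v> / s and
   s_uv = (<E'_u, E'_v> + <E, E'_uv> - s_u s_v) / s,  where E'_v = R^T v + v^T R.
   The Hessian form of P5 is then psi''(s) s_u s_v + psi'(s) s_uv.  For directions with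
   entries in [-1, 1] one has |s_u| = O(|R|_F), |R|_F^2 = tr (E + I) <= n (s + 1) and
   s_uv = O(1 + 1/s) = O(1 + 1/d), while |psi'| <= 1 and psi''(s) (s + 1) =
   b (s + 1) / psi(s)^3 is bounded; so the Hessian entries are bounded on U, and an
   entrywise bound M gives -nM I <= Hessian <= nM I.  Every ingredient is moreover a
   bounded Lipschitz function on U intersected with the unit ball around a point, and
   such functions are closed under sums, products, and inverses and square roots of
   functions bounded away from 0: this gives the local Lipschitz bound. *)

Section ScalarDerivatives.
Context {K : realType} {V : normedModType K}.
Implicit Types (f g : V -> K) (x v : V).

Lemma is_derive_line f x v df :
  is_derive x v f df <-> is_derive (0 : K) 1 (fun t : K => f (t *: v + x)) df.
Proof.
have Dline : 'D_v f x = 'D_1 (fun t : K => f (t *: v + x)) 0.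
  rewrite /derive; suff -> : (fun h : K => h^-1 *: (f (h *: v + x) - f x)) =
    (fun h : K => h^-1 *: ((fun t : K => f (t *: v + x)) (h *: 1 + 0) -
                          (fun t : K => f (t *: v + x)) 0)) by [].
  by apply/funext => h; rewrite addr0 scale0r add0r [_%:A]mulr1.
split=> -[fx Dfx]; split.
- exact: (derivable1P f x v).1.
- by rewrite -Dline.
- exact: (derivable1P f x v).2.
- by rewrite Dline.
Qed.

Lemma is_derive_comp1 {h : K -> K} {g x v dg dh} :
  is_derive x v g dg -> is_derive (g x) 1 h dh ->
  is_derive x v (fun y => h (g y)) (dh * dg).
Proof.
move=> /is_derive_line Dg Dh; apply/is_derive_line.
have Dh0 : is_derive ((fun t : K => g (t *: v + x)) 0) 1 h dh.
  by rewrite /= scale0r add0r.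
exact: is_derive1_comp.
Qed.

Lemma is_derive_mul {f g x v df dg} :
  is_derive x v f df -> is_derive x v g dg ->
  is_derive x v (fun y => f y * g y) (f x * dg + g x * df).
Proof. exact: is_deriveM. Qed.

Lemma is_derive_sum_fun {n} {F : 'I_n -> V -> K} {x v} {dF : 'I_n -> K} :
  (forall i, is_derive x v (F i) (dF i)) ->
  is_derive x v (fun y => \sum_(i < n) F i y) (\sum_(i < n) dF i).
Proof. by move=> DF; rewrite -fct_sumE; exact: is_derive_sum. Qed.

Lemma is_derive_inv {f x v df} : f x != 0 -> is_derive x v f df ->
  is_derive x v (fun y => (f y)^-1) (- (f x) ^- 2 * df).
Proof. by move=> fx0 [fx Dfx]; split; [exact: derivableV | rewrite deriveV // Dfx]. Qed.

Lemma differentiable_sum_fun n (F : 'I_n -> V -> K) x :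
  (forall i, differentiable (F i) x) ->
  differentiable (fun y => \sum_(i < n) F i y) x.
Proof. by move=> dF; rewrite -fct_sumE; exact: differentiable_sum. Qed.

Lemma differentiable_comp1 (h : K -> K) g x :
  differentiable g x -> derivable h (g x) 1 -> differentiable (fun y => h (g y)) x.
Proof. by move=> dg /derivable1_diffP dh; exact: differentiable_comp. Qed.

Lemma differentiable_near_eq {f g x} :
  (\near x, f x = g x) -> differentiable f x -> differentiable g x.
Proof.
move=> fg df.
suff dh : differentiable (g - f) x.
  by have := differentiableD df dh; rewrite addrC subrK.
have : \near x, (g - f) x = 0 by near=> y; rewrite !fctE (near fg y) // subrr.
move: (g - f) => h h0; have hx : h x = 0 := nbhs_singleton h0.
have hE : h \o shift x = cst (h x) + \0 +o_ (0 : V) id.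
  apply/eqaddoP => eps eps0; move: h0; rewrite (nbhs0P _ x) => h0.
  near=> e; rewrite /= hx /= !fctE addr0 subr0 addrC.
  have -> : h (x + e) = 0 by near: e.
  by rewrite normr0 mulr_ge0 // ltW.
apply/diff_locallyP.
have -> : 'd h x = \0 :> (V -> K) by apply: diff_unique => //; exact: cst_continuous.
by split => //; exact: cst_continuous.
Unshelve. all: by end_near. Qed.

End ScalarDerivatives.

Section Profile.
Context {K : realType}.
Variables (b c : K).
Hypothesis b_gt0 : 0 < b.
Implicit Types t : K.

Definition psi t : K := Num.sqrt ((t + c) ^+ 2 + b).
Definition dpsi t : K := (t + c) / psi t.
Definition d2psi t : K := b / psi t ^+ 3.

Lemma psi_radicand_gt0 t : 0 < (t + c) ^+ 2 + b.
Proof. by rewrite ltr_wpDl ?sqr_ge0. Qed.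

Lemma psi_gt0 t : 0 < psi t.
Proof. by rewrite sqrtr_gt0 psi_radicand_gt0. Qed.

Lemma sqr_psi t : psi t ^+ 2 = (t + c) ^+ 2 + b.
Proof. by rewrite sqr_sqrtr // ltW // psi_radicand_gt0. Qed.

Lemma is_derive_psi t : is_derive t 1 psi (dpsi t).
Proof.
have Dsc := is_derive_shift t 1 c.
have Dr : is_derive t 1 (fun s : K => (s + c) ^+ 2 + b) (2 * (t + c)).
  have D := is_deriveD (is_derive_mul Dsc Dsc) (is_derive_cst b t 1).
  by apply: is_derive_eq D _ => /=; ring.
have := is_derive_comp1 Dr (is_derive1_sqrt (psi_radicand_gt0 t)).
move/is_derive_eq; apply; have := psi_gt0 t; rewrite /dpsi /psi => psi0.
by field; rewrite gt_eqF.
Qed.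

Lemma is_derive_dpsi t : is_derive t 1 dpsi (d2psi t).
Proof.
have psi0 := psi_gt0 t.
have Dinv := is_derive_inv (lt0r_neq0 psi0) (is_derive_psi t).
have := is_derive_mul (is_derive_shift t 1 c) Dinv.
move/is_derive_eq; apply; rewrite /= /dpsi /d2psi.
have b_psi : b = psi t ^+ 2 - (t + c) ^+ 2 by rewrite sqr_psi addrC addKr.
rewrite [in RHS]b_psi; field; exact: lt0r_neq0.
Qed.

Lemma norm_shift_le_psi t : `|t + c| <= psi t.
Proof. by rewrite -sqrtr_sqr ler_wsqrtr // lerDl ltW. Qed.

Lemma norm_dpsi_le1 t : `|dpsi t| <= 1.
Proof.
have psi0 := psi_gt0 t.
by rewrite /dpsi normrM normfV (gtr0_norm psi0) ler_pdivrMr // mul1r norm_shift_le_psi.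
Qed.

Lemma d2psi_linear_bound t : 0 <= t -> d2psi t * (t + 1) <= 1 + (1 + `|c|) / Num.sqrt b.
Proof.
move=> t0; have psi0 := psi_gt0 t; set p := psi t in psi0 *.
have sb0 : 0 < Num.sqrt b by rewrite sqrtr_gt0.
have C0 : 0 <= 1 + `|c| by rewrite addr_ge0.
have b_p2 : b / p ^+ 2 <= 1.
  by rewrite ler_pdivrMr ?exprn_gt0 // mul1r sqr_psi lerDr sqr_ge0.
have sb_p : Num.sqrt b <= p.
  by rewrite /p /psi ler_wsqrtr // lerDr sqr_ge0.
have t_p : t + 1 <= p + (1 + `|c|).
  have := norm_shift_le_psi t; rewrite -/p.
  have := ler_norm (t + c); have := ler_norm (- c); rewrite normrN; lra.
have e : b / p ^+ 3 * (p + (1 + `|c|)) = b / p ^+ 2 + (1 + `|c|) * (b / p ^+ 2 * p^-1).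
  by field; rewrite gt_eqF.
rewrite /d2psi -/p; apply: (le_trans (ler_wpM2l _ t_p)).
  by rewrite divr_ge0 ?exprn_ge0 ?ltW.
rewrite e lerD // ler_wpM2l // -[(Num.sqrt b)^-1]mul1r.
by rewrite ler_pM ?divr_ge0 ?exprn_ge0 ?invr_ge0 ?(ltW b_gt0) ?(ltW psi0) ?(ltW sb0) //
  lef_pV2 ?posrE.
Qed.

End Profile.

Lemma norm_sum_le {K : realType} k (F : 'I_k -> K) a :
  (forall i, `|F i| <= a) -> `|\sum_(i < k) F i| <= k%:R * a.
Proof.
move=> Fa; apply: (le_trans (ler_norm_sum _ _ _)).
by apply: le_trans (ler_sum _ (fun i _ => Fa i)) _; rewrite sumr_const card_ord mulr_natl.
Qed.

Lemma sum_sqr_le_sqr_sum {K : realType} k (x : 'I_k -> K) : (forall i, 0 <= x i) ->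
  \sum_(i < k) x i ^+ 2 <= (\sum_(i < k) x i) ^+ 2.
Proof.
elim: k x => [|k IH] x x0; first by rewrite !big_ord0 expr0n.
rewrite !big_ord_recr /=.
have := IH (fun i => x (widen_ord (leqnSn k) i)) (fun i => x0 _).
have S0 : 0 <= \sum_(i < k) x (widen_ord (leqnSn k) i) by apply: sumr_ge0.
have := mulr_ge0 S0 (x0 ord_max).
set S := \sum_(i < k) _; set T := \sum_(i < k) _; set y := x ord_max.
rewrite sqrrD; lra.
Qed.

Section FrobeniusProduct.
Context {K : realType} {m n : nat}.
Implicit Types A B : 'M[K]_(m, n).

Definition mxdot A B : K := \sum_(i < m) \sum_(j < n) A i j * B i j.

Lemma mxdotC A B : mxdot A B = mxdot B A.
Proof. by apply: eq_bigr => i _; apply: eq_bigr => j _; rewrite mulrC. Qed.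

Lemma mxdot_self_ge0 A : 0 <= mxdot A A.
Proof. by apply: sumr_ge0 => i _; apply: sumr_ge0 => j _; rewrite -expr2 sqr_ge0. Qed.

Lemma frobE A : frob A = Num.sqrt (mxdot A A).
Proof.
by congr Num.sqrt; apply: eq_bigr => i _; apply: eq_bigr => j _; rewrite expr2.
Qed.

Lemma frob_ge0 A : 0 <= frob A.
Proof. exact: sqrtr_ge0. Qed.

Lemma norm_entry_le_frob A i j : `|A i j| <= frob A.
Proof.
have sq0 (x : K) : 0 <= x * x by rewrite -expr2 sqr_ge0.
rewrite frobE -sqrtr_sqr ler_wsqrtr // /mxdot (bigD1 i) //= (bigD1 j) //= -addrA expr2.
by rewrite lerDl addr_ge0 ?sumr_ge0 // => k _; rewrite ?sumr_ge0.
Qed.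

Lemma norm_mxdot_le {A B a b} :
  (forall i j, `|A i j| <= a) -> (forall i j, `|B i j| <= b) ->
  `|mxdot A B| <= (m * n)%:R * (a * b).
Proof.
move=> Aa Bb; rewrite natrM -mulrA; apply: norm_sum_le => i; apply: norm_sum_le => j.
by rewrite normrM ler_pM.
Qed.

Lemma frob_le_sum_norm A : frob A <= \sum_(i < m) \sum_(j < n) `|A i j|.
Proof.
have S0 : 0 <= \sum_(i < m) \sum_(j < n) `|A i j|.
  by apply: sumr_ge0 => i _; apply: sumr_ge0.
rewrite /frob -(ger0_norm S0) -sqrtr_sqr ler_wsqrtr //.
have rows0 i : 0 <= \sum_(j < n) `|A i j| by apply: sumr_ge0.
apply: le_trans _ (sum_sqr_le_sqr_sum _ _ rows0); apply: ler_sum => i _.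
apply: le_trans _ (sum_sqr_le_sqr_sum _ (fun j => `|A i j|) (fun j => normr_ge0 _)).
by apply: ler_sum => j _; rewrite real_normK ?num_real.
Qed.

End FrobeniusProduct.

Section MatrixDerivatives.
Context {K : realType} {V : normedModType K} {m n : nat}.
Implicit Types (F G : V -> 'M[K]_(m, n)) (x v : V).

Lemma is_derive_mxdot {F G x v} {dF dG : 'M[K]_(m, n)} :
  (forall i j, is_derive x v (fun y => F y i j) (dF i j)) ->
  (forall i j, is_derive x v (fun y => G y i j) (dG i j)) ->
  is_derive x v (fun y => mxdot (F y) (G y)) (mxdot dF (G x) + mxdot (F x) dG).
Proof.
move=> DF DG.
have D := is_derive_sum_fun (fun i =>
  is_derive_sum_fun (fun j => is_derive_mul (DF i j) (DG i j))).
apply: is_derive_eq D _; rewrite /mxdot -big_split; apply: eq_bigr => i _.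
by rewrite -big_split; apply: eq_bigr => j _; rewrite addrC [dF i j * _]mulrC.
Qed.

Lemma differentiable_mxdot F G x :
  (forall i j, differentiable (fun y => F y i j) x) ->
  (forall i j, differentiable (fun y => G y i j) x) ->
  differentiable (fun y => mxdot (F y) (G y)) x.
Proof.
move=> dF dG; apply: differentiable_sum_fun => i; apply: differentiable_sum_fun => j.
exact: differentiableM.
Qed.

End MatrixDerivatives.

Lemma is_derive_coord {K : realType} {m n} (Y v : 'M[K]_(m, n)) i j :
  is_derive Y v (fun Z => Z i j) (v i j).
Proof.
apply/is_derive_line.
have -> : (fun t : K => (t *: v + Y) i j) = (fun t => t * v i j + Y i j).
  by apply/funext => t; rewrite !mxE.
have D := is_deriveD
  (is_derive_mul (is_derive_id (0 : K) (1 : K)) (is_derive_cst (v i j) (0 : K) (1 : K)))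
  (is_derive_cst (Y i j) (0 : K) (1 : K)).
by apply: is_derive_eq D _; rewrite mul0r add0r mulr1 addr0.
Qed.

Section Strain.
Context {K : realType} {m n : nat}.
Implicit Types Y Z u v : 'M[K]_(m, n).

Definition strain Y : 'M[K]_n := Y^T *m Y - 1%:M.
Definition dstrain Y v : 'M[K]_n := Y^T *m v + v^T *m Y.

Lemma strainE Y i j : strain Y i j = \sum_(k < m) Y k i * Y k j - (i == j)%:R.
Proof. by rewrite !mxE; congr (_ - _); apply: eq_bigr => k _; rewrite !mxE. Qed.

Lemma dstrainE Y v i j :
  dstrain Y v i j = \sum_(k < m) (Y k i * v k j + v k i * Y k j).
Proof. by rewrite !mxE big_split; congr (_ + _); apply: eq_bigr => k _; rewrite !mxE. Qed.

Lemma is_derive_strain Y v i j :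
  is_derive Y v (fun Z => strain Z i j) (dstrain Y v i j).
Proof.
rewrite (_ : (fun Z => _) = fun Z => \sum_(k < m) Z k i * Z k j - (i == j)%:R);
  last by apply/funext => Z; rewrite strainE.
have D := is_deriveB (is_derive_sum_fun (fun k =>
  is_derive_mul (is_derive_coord Y v k i) (is_derive_coord Y v k j)))
  (is_derive_cst ((i == j)%:R : K) Y v).
apply: is_derive_eq D _; rewrite subr0 dstrainE.
by apply/eq_bigr => k _; rewrite [v k i * _]mulrC.
Qed.

Lemma is_derive_dstrain Y u v i j :
  is_derive Y u (fun Z => dstrain Z v i j) (dstrain u v i j).
Proof.
rewrite (_ : (fun Z => _) = fun Z => \sum_(k < m) (Z k i * v k j + v k i * Z k j));
  last by apply/funext => Z; rewrite dstrainE.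
have D := is_derive_sum_fun (fun k => is_deriveD
  (is_derive_mul (is_derive_coord Y u k i) (is_derive_cst (v k j) Y u))
  (is_derive_mul (is_derive_cst (v k i) Y u) (is_derive_coord Y u k j))).
apply: is_derive_eq D _; rewrite dstrainE.
by apply/eq_bigr => k _; rewrite /= !mulr0 add0r addr0 mulrC.
Qed.

Lemma differentiable_strain Y i j : differentiable (fun Z => strain Z i j) Y.
Proof.
rewrite (_ : (fun Z => _) = fun Z => \sum_(k < m) Z k i * Z k j - (i == j)%:R);
  last by apply/funext => Z; rewrite strainE.
apply: differentiableB; last exact: differentiable_cst.
by apply: differentiable_sum_fun => k; apply: differentiableM; exact: differentiable_coord.
Qed.

Lemma differentiable_dstrain Y v i j : differentiable (fun Z => dstrain Z v i j) Y.
Proof.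
rewrite (_ : (fun Z => _) = fun Z => \sum_(k < m) (Z k i * v k j + v k i * Z k j));
  last by apply/funext => Z; rewrite dstrainE.
apply: differentiable_sum_fun => k.
by apply: differentiableD; apply: differentiableM;
  (exact: differentiable_coord || exact: differentiable_cst).
Qed.

Definition strain_norm Y : K := frob (strain Y).

Definition dstrain_norm Y v : K := mxdot (strain Y) (dstrain Y v) / strain_norm Y.

Definition d2strain_norm Y u v : K :=
  (mxdot (dstrain Y u) (dstrain Y v) + mxdot (strain Y) (dstrain u v)
   - dstrain_norm Y u * dstrain_norm Y v) / strain_norm Y.

Lemma is_derive_strain_norm Y v : 0 < strain_norm Y ->
  is_derive Y v strain_norm (dstrain_norm Y v).
Proof.
move=> s0; have := s0; rewrite /strain_norm frobE sqrtr_gt0 => q0.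
have Dq := is_derive_mxdot (is_derive_strain Y v) (is_derive_strain Y v).
have D := is_derive_comp1 Dq (is_derive1_sqrt q0).
apply: is_derive_eq D _.
rewrite /dstrain_norm /strain_norm frobE [mxdot (dstrain _ _) _]mxdotC.
by field; rewrite gt_eqF // -frobE.
Qed.

Lemma is_derive_dstrain_norm Y u v : 0 < strain_norm Y ->
  is_derive Y u (fun Z => dstrain_norm Z v) (d2strain_norm Y u v).
Proof.
move=> s0.
have Dp := is_derive_mxdot (is_derive_strain Y u) (is_derive_dstrain Y u v).
have D := is_derive_mul Dp (is_derive_inv (lt0r_neq0 s0) (is_derive_strain_norm Y u s0)).
apply: is_derive_eq D _; rewrite /d2strain_norm /dstrain_norm.
by field; rewrite gt_eqF.
Qed.

Lemma differentiable_strain_norm Y : 0 < strain_norm Y -> differentiable strain_norm Y.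
Proof.
move=> s0; have := s0; rewrite /strain_norm frobE sqrtr_gt0 => q0.
apply: (differentiable_near_eq (f := fun Z => Num.sqrt (mxdot (strain Z) (strain Z)))).
  by near=> Z; rewrite /strain_norm frobE.
apply: differentiable_comp1.
  by apply: differentiable_mxdot => i j; exact: differentiable_strain.
exact: @ex_derive _ _ _ _ _ _ _ (is_derive1_sqrt q0).
Unshelve. all: by end_near. Qed.

Lemma differentiable_dstrain_norm Y v : 0 < strain_norm Y ->
  differentiable (fun Z => dstrain_norm Z v) Y.
Proof.
move=> s0; apply: differentiableM.
  apply: differentiable_mxdot => i j;
  [exact: differentiable_strain | exact: differentiable_dstrain].
by apply: differentiableV; [exact: differentiable_strain_norm | exact: lt0r_neq0].
Qed.

End Strain.

Section HessianForm.
Context {K : realType} {m n : nat}.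
Variables (b c : K).
Hypothesis b_gt0 : 0 < b.
Implicit Types Y u v : 'M[K]_(m, n).

Definition hess_form Y u v : K :=
  d2psi b c (strain_norm Y) * dstrain_norm Y u * dstrain_norm Y v
  + dpsi b c (strain_norm Y) * d2strain_norm Y u v.

Lemma is_derive_psi_strain_norm Y v : 0 < strain_norm Y ->
  is_derive Y v (fun Z => psi b c (strain_norm Z))
    (dpsi b c (strain_norm Y) * dstrain_norm Y v).
Proof.
move=> s0; exact: is_derive_comp1 (is_derive_strain_norm Y v s0) (is_derive_psi b c b_gt0 _).
Qed.

Lemma is_derive2_psi_strain_norm Y u v : 0 < strain_norm Y ->
  is_derive Y u (fun Z => dpsi b c (strain_norm Z) * dstrain_norm Z v) (hess_form Y u v).
Proof.
move=> s0.
have D1 := is_derive_comp1 (is_derive_strain_norm Y u s0) (is_derive_dpsi b c b_gt0 _).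
have D := is_derive_mul D1 (is_derive_dstrain_norm Y u v s0).
by apply: is_derive_eq D _; rewrite /hess_form; ring.
Qed.

Lemma differentiable_psi_strain_norm Y : 0 < strain_norm Y ->
  differentiable (fun Z => psi b c (strain_norm Z)) Y.
Proof.
move=> s0; apply: differentiable_comp1; first exact: differentiable_strain_norm.
exact: @ex_derive _ _ _ _ _ _ _ (is_derive_psi b c b_gt0 _).
Qed.

Lemma differentiable_derive_psi_strain_norm Y v : 0 < strain_norm Y ->
  differentiable (fun Z => dpsi b c (strain_norm Z) * dstrain_norm Z v) Y.
Proof.
move=> s0; apply: differentiableM; last exact: differentiable_dstrain_norm.
apply: differentiable_comp1; first exact: differentiable_strain_norm.
exact: @ex_derive _ _ _ _ _ _ _ (is_derive_dpsi b c b_gt0 _).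
Qed.

End HessianForm.

Section StrainBounds.
Context {K : realType} {m n : nat}.
Implicit Types Y u v : 'M[K]_(m, n).

Definition unit_entries v := forall i j, `|v i j| <= 1.

Lemma sqr_frob_le_strain_norm Y : frob Y ^+ 2 <= n%:R * (strain_norm Y + 1).
Proof.
(* |Y|_F^2 is the trace of Y^T Y = strain Y + 1. *)
have diag j : \sum_(k < m) Y k j * Y k j <= strain_norm Y + 1.
  have E : `|strain Y j j| <= strain_norm Y := norm_entry_le_frob _ j j.
  move: (le_trans (ler_norm _) E); rewrite strainE eqxx mulr1n; lra.
rewrite frobE sqr_sqrtr ?mxdot_self_ge0 // /mxdot exchange_big /=.
by apply: le_trans (ler_sum _ (fun j _ => diag j)) _; rewrite sumr_const card_ord mulr_natl.
Qed.

Lemma norm_dstrain_le {Y v a} i j :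
  (forall k l, `|Y k l| <= a) -> unit_entries v ->
  `|dstrain Y v i j| <= m%:R * (2 * a).
Proof.
move=> Ya v1; rewrite dstrainE; apply: norm_sum_le => k.
apply: le_trans (ler_normD _ _) _; rewrite !normrM.
have h1 : `|Y k i| * `|v k j| <= a * 1 by rewrite ler_pM.
have h2 : `|v k i| * `|Y k j| <= 1 * a by rewrite ler_pM.
lra.
Qed.

Lemma dstrain_norm_bound : exists C, forall Y v, unit_entries v -> 0 < strain_norm Y ->
  `|dstrain_norm Y v| <= C * frob Y.
Proof.
exists ((n * n)%:R * (m%:R * 2)) => Y v v1 s0.
rewrite /dstrain_norm normrM normfV (gtr0_norm s0) ler_pdivrMr //.
have E_le k l : `|strain Y k l| <= strain_norm Y := norm_entry_le_frob _ k l.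
have dE_le k l := norm_dstrain_le k l (norm_entry_le_frob Y) v1.
apply: le_trans (norm_mxdot_le E_le dE_le) _.
by rewrite le_eqVlt; apply/orP; left; apply/eqP; ring.
Qed.

Lemma d2strain_norm_bound : exists C, forall Y u v,
  unit_entries u -> unit_entries v -> 0 < strain_norm Y ->
  `|d2strain_norm Y u v| <= C * (1 + (strain_norm Y)^-1).
Proof.
have [C dsC] := dstrain_norm_bound.
pose a : K := m%:R * 2; pose P := (n * n)%:R * (a * a) + C * C; pose Q := (n * n)%:R * a.
have a0 : 0 <= a by rewrite mulr_ge0.
have CC0 : 0 <= C * C by rewrite -expr2 sqr_ge0.
have P0 : 0 <= P by rewrite /P addr_ge0 // !mulr_ge0.
have Q0 : 0 <= Q by rewrite /Q mulr_ge0.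
exists (P * n%:R + Q) => Y u v u1 v1 s0.
set s := strain_norm Y in s0 *.
have E_le k l : `|strain Y k l| <= s := norm_entry_le_frob _ k l.
have dEu_le k l := norm_dstrain_le k l (norm_entry_le_frob Y) u1.
have dEv_le k l := norm_dstrain_le k l (norm_entry_le_frob Y) v1.
have d2E_le k l := norm_dstrain_le k l u1 v1.
have h1 := norm_mxdot_le dEu_le dEv_le.
have h2 := norm_mxdot_le E_le d2E_le; rewrite mulr1 in h2.
have h3 : `|dstrain_norm Y u * dstrain_norm Y v| <= (C * frob Y) * (C * frob Y).
  by rewrite normrM ler_pM ?dsC.
have hr : P * frob Y ^+ 2 <= P * (n%:R * (s + 1)).
  by rewrite ler_wpM2l ?sqr_frob_le_strain_norm.
set r := frob Y in h1 h3 hr *.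
have num_le : `|mxdot (dstrain Y u) (dstrain Y v) + mxdot (strain Y) (dstrain u v)
    - dstrain_norm Y u * dstrain_norm Y v| <= P * r ^+ 2 + Q * s.
  apply: le_trans (ler_normB _ _) _; apply: le_trans (lerD (ler_normD _ _) h3) _.
  have -> : P * r ^+ 2 + Q * s =
    (n * n)%:R * (m%:R * (2 * r) * (m%:R * (2 * r))) + (n * n)%:R * (s * (m%:R * 2))
    + C * r * (C * r) by rewrite /P /Q /a; ring.
  by apply: lerD => //; apply: lerD.
rewrite /d2strain_norm -/s normrM normfV (gtr0_norm s0) ler_pdivrMr //.
have -> : (P * n%:R + Q) * (1 + s^-1) * s = (P * n%:R + Q) * (s + 1).
  by field; rewrite gt_eqF.
apply: le_trans num_le _; nra.
Qed.

End StrainBounds.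

Lemma hess_form_bound {K : realType} {m n : nat} (b c d : K) : 0 < b -> 0 < d ->
  exists M, forall Y u v : 'M[K]_(m, n), unit_entries u -> unit_entries v ->
    d < strain_norm Y -> `|hess_form b c Y u v| <= M.
Proof.
move=> b0 d0; have [C dsC] := @dstrain_norm_bound K m n.
have [D d2sD] := @d2strain_norm_bound K m n.
pose B := 1 + (1 + `|c|) / Num.sqrt b.
exists (C * C * n%:R * B + `|D| * (1 + d^-1)) => Y u v u1 v1 ds.
have s0 : 0 < strain_norm Y := lt_trans d0 ds.
set s := strain_norm Y in s0 ds *.
have d2psi0 : 0 <= d2psi b c s by rewrite divr_ge0 ?exprn_ge0 ?ltW ?psi_gt0.
have CC0 : 0 <= C * C by rewrite -expr2 sqr_ge0.
have CCn0 : 0 <= C * C * n%:R by rewrite mulr_ge0.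
have first_le : `|d2psi b c s * dstrain_norm Y u * dstrain_norm Y v| <= C * C * n%:R * B.
  have h : `|dstrain_norm Y u * dstrain_norm Y v| <= C * C * n%:R * (s + 1).
    rewrite normrM; apply: le_trans (ler_pM _ _ (dsC _ _ u1 s0) (dsC _ _ v1 s0)) _ => //.
    have -> : C * frob Y * (C * frob Y) = C * C * frob Y ^+ 2 by ring.
    by rewrite -[C * C * n%:R * _]mulrA ler_wpM2l // sqr_frob_le_strain_norm.
  rewrite -mulrA normrM (ger0_norm d2psi0); apply: le_trans (ler_wpM2l d2psi0 h) _.
  have -> : d2psi b c s * (C * C * n%:R * (s + 1)) = C * C * n%:R * (d2psi b c s * (s + 1)).
    by ring.
  by rewrite ler_wpM2l // d2psi_linear_bound // frob_ge0.
have second_le : `|dpsi b c s * d2strain_norm Y u v| <= `|D| * (1 + d^-1).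
  rewrite normrM -[X in _ <= X]mul1r; apply: ler_pM => //; first exact: norm_dpsi_le1.
  have inv_le : s^-1 <= d^-1 by rewrite lef_pV2 ?posrE // ltW.
  have s1_0 : 0 <= 1 + s^-1 by rewrite addr_ge0 // invr_ge0 ltW.
  apply: le_trans (d2sD _ _ _ u1 v1 s0) _; apply: le_trans (ler_norm _) _.
  by rewrite normrM (ger0_norm s1_0) ler_wpM2l // lerD2l.
by apply: le_trans (ler_normD _ _) _; rewrite /hess_form -/s lerD.
Qed.

Section BoundedLipschitz.
Context {K : realType} {T : Type}.
Context {dist : T -> T -> K} {A : set T}.
Implicit Types f g : T -> K.

Definition bdd_lipschitz g :=
  (exists C, forall x, A x -> `|g x| <= C) /\
  (exists M, forall x y, A x -> A y -> `|g x - g y| <= M * dist x y).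

Lemma bdd_lipschitz_cst a : bdd_lipschitz (fun=> a).
Proof.
split; first by exists `|a|.
by exists 0 => x y _ _; rewrite subrr normr0 mul0r.
Qed.

Lemma bdd_lipschitzD {f g} : bdd_lipschitz f -> bdd_lipschitz g ->
  bdd_lipschitz (fun x => f x + g x).
Proof.
move=> [[Cf fC] [Mf fM]] [[Cg gC] [Mg gM]]; split.
  by exists (Cf + Cg) => x Ax; apply: le_trans (ler_normD _ _) (lerD (fC x Ax) (gC x Ax)).
exists (Mf + Mg) => x y Ax Ay; rewrite mulrDl.
have -> : f x + g x - (f y + g y) = (f x - f y) + (g x - g y) by ring.
exact: le_trans (ler_normD _ _) (lerD (fM x y Ax Ay) (gM x y Ax Ay)).
Qed.

Lemma bdd_lipschitzN {f} : bdd_lipschitz f -> bdd_lipschitz (fun x => - f x).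
Proof.
move=> [[C fC] [M fM]]; split; first by exists C => x Ax; rewrite normrN fC.
by exists M => x y Ax Ay; rewrite -opprD normrN fM.
Qed.

Lemma bdd_lipschitzB {f g} : bdd_lipschitz f -> bdd_lipschitz g ->
  bdd_lipschitz (fun x => f x - g x).
Proof. by move=> lf lg; apply: bdd_lipschitzD lf (bdd_lipschitzN lg). Qed.

Lemma bdd_lipschitzM {f g} : bdd_lipschitz f -> bdd_lipschitz g ->
  bdd_lipschitz (fun x => f x * g x).
Proof.
move=> [[Cf fC] [Mf fM]] [[Cg gC] [Mg gM]]; split.
  by exists (Cf * Cg) => x Ax; rewrite normrM ler_pM ?fC ?gC.
exists (Cf * Mg + Cg * Mf) => x y Ax Ay.
have -> : f x * g x - f y * g y = f x * (g x - g y) + g y * (f x - f y) by ring.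
apply: le_trans (ler_normD _ _) _; rewrite !normrM mulrDl -!mulrA.
by apply: lerD; apply: ler_pM; rewrite ?fC ?gC ?fM ?gM.
Qed.

Lemma bdd_lipschitz_sum k (F : 'I_k -> T -> K) : (forall i, bdd_lipschitz (F i)) ->
  bdd_lipschitz (fun x => \sum_(i < k) F i x).
Proof.
elim: k F => [|k IH] F lF.
  by under [fun x => _]funext do rewrite big_ord0; exact: bdd_lipschitz_cst.
under [fun x => _]funext do rewrite big_ord_recr.
by apply: bdd_lipschitzD; [apply: IH => i |].
Qed.

Lemma bdd_lipschitzX {g} k : bdd_lipschitz g -> bdd_lipschitz (fun x => g x ^+ k).
Proof.
move=> lg; elim: k => [|k IH].
  by under [fun x => _]funext do rewrite expr0; exact: bdd_lipschitz_cst.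
by under [fun x => _]funext do rewrite exprS; exact: bdd_lipschitzM.
Qed.

Lemma bdd_lipschitzV {g e} : 0 < e -> (forall x, A x -> e <= g x) ->
  bdd_lipschitz g -> bdd_lipschitz (fun x => (g x)^-1).
Proof.
move=> e0 ge [_ [M gM]]; have g0 x : A x -> 0 < g x by move/ge; apply: lt_le_trans.
have inv_le x : A x -> (g x)^-1 <= e^-1 by move=> Ax; rewrite lef_pV2 ?posrE ?g0 ?ge.
split.
  by exists e^-1 => x Ax; rewrite ger0_norm ?inv_le // invr_ge0 ltW ?g0.
exists (M * (e^-1 * e^-1)) => x y Ax Ay.
have [gx0 gy0] := (g0 x Ax, g0 y Ay).
have -> : (g x)^-1 - (g y)^-1 = (g y - g x) * ((g x)^-1 * (g y)^-1).
  by field; rewrite !gt_eqF.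
have inv_prod : `|(g x)^-1 * (g y)^-1| <= e^-1 * e^-1.
  rewrite normrM !ger0_norm ?invr_ge0 ?(ltW gx0) ?(ltW gy0) //.
  by apply: ler_pM; rewrite ?invr_ge0 ?(ltW gx0) ?(ltW gy0) ?inv_le.
by rewrite normrM -normrN opprB mulrAC; apply: ler_pM; rewrite ?gM.
Qed.

Lemma bdd_lipschitz_sqrt {g e} : 0 < e -> (forall x, A x -> e <= g x) ->
  bdd_lipschitz g -> bdd_lipschitz (fun x => Num.sqrt (g x)).
Proof.
move=> e0 ge [[C gC] [M gM]]; have g0 x : A x -> 0 < g x by move/ge; apply: lt_le_trans.
have sqrt_ge x : A x -> Num.sqrt e <= Num.sqrt (g x) by move=> Ax; rewrite ler_wsqrtr ?ge.
have se0 : 0 < Num.sqrt e by rewrite sqrtr_gt0.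
split.
  exists (Num.sqrt C) => x Ax; rewrite ger0_norm ?sqrtr_ge0 // ler_wsqrtr //.
  exact: le_trans (ler_norm _) (gC x Ax).
exists (M * (2 * Num.sqrt e)^-1) => x y Ax Ay.
have sum_ge : 2 * Num.sqrt e <= Num.sqrt (g x) + Num.sqrt (g y).
  by have := lerD (sqrt_ge x Ax) (sqrt_ge y Ay); lra.
have sum0 : 0 < Num.sqrt (g x) + Num.sqrt (g y) by apply: lt_le_trans sum_ge; lra.
have -> : Num.sqrt (g x) - Num.sqrt (g y) =
    (g x - g y) * (Num.sqrt (g x) + Num.sqrt (g y))^-1.
  rewrite -{2}(sqr_sqrtr (ltW (g0 x Ax))) -{2}(sqr_sqrtr (ltW (g0 y Ay))).
  by field; rewrite gt_eqF.
rewrite normrM mulrAC; apply: ler_pM; rewrite ?gM //.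
by rewrite ger0_norm ?invr_ge0 ?(ltW sum0) // lef_pV2 ?posrE ?mulr_gt0.
Qed.

End BoundedLipschitz.
Arguments bdd_lipschitz {K T} dist A g.

Section HessianFormLipschitz.
Context {K : realType} {m n : nat}.
Variables (b c d : K) (X : 'M[K]_(m, n)).
Hypotheses (b_gt0 : 0 < b) (d_gt0 : 0 < d).

Let A := [set Y : 'M[K]_(m, n) | d < strain_norm Y /\ frob (Y - X) < 1].
Let lip := bdd_lipschitz (fun Y Z : 'M[K]_(m, n) => frob (Y - Z)) A.

Let lip_coord i j : lip (fun Y => Y i j).
Proof.
have entry_le (Y Z : 'M[K]_(m, n)) : `|Y i j - Z i j| <= frob (Y - Z).
  by have := norm_entry_le_frob (Y - Z) i j; rewrite !mxE.
split; last by exists 1 => Y Z _ _; rewrite mul1r entry_le.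
exists (`|X i j| + 1) => Y [_ YX].
have := le_trans (entry_le Y X) (ltW YX).
have := ler_normD (Y i j - X i j) (X i j); rewrite subrK; lra.
Qed.

Let lip_mxdot {p q} {F G : 'M[K]_(m, n) -> 'M[K]_(p, q)} :
  (forall i j, lip (fun Y => F Y i j)) -> (forall i j, lip (fun Y => G Y i j)) ->
  lip (fun Y => mxdot (F Y) (G Y)).
Proof.
move=> lF lG; apply: bdd_lipschitz_sum => i; apply: bdd_lipschitz_sum => j.
exact: bdd_lipschitzM (lF i j) (lG i j).
Qed.

Let lip_strain i j : lip (fun Y => strain Y i j).
Proof.
rewrite (_ : (fun Y => _) = fun Y : 'M[K]_(m, n) => \sum_(k < m) Y k i * Y k j - (i == j)%:R);
  last by apply/funext => Y; rewrite strainE.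
apply: bdd_lipschitzB; last exact: bdd_lipschitz_cst.
by apply: bdd_lipschitz_sum => k; exact: bdd_lipschitzM (lip_coord k i) (lip_coord k j).
Qed.

Let lip_dstrain v i j : lip (fun Y => dstrain Y v i j).
Proof.
rewrite (_ : (fun Y => _) =
    fun Y : 'M[K]_(m, n) => \sum_(k < m) (Y k i * v k j + v k i * Y k j));
  last by apply/funext => Y; rewrite dstrainE.
apply: bdd_lipschitz_sum => k.
by apply: bdd_lipschitzD; apply: bdd_lipschitzM;
  (exact: lip_coord || exact: bdd_lipschitz_cst).
Qed.

Let s_ge Y : A Y -> d <= strain_norm Y.
Proof. by case=> /ltW. Qed.

Let lip_strain_norm : lip strain_norm.
Proof.
rewrite (_ : strain_norm = fun Y : 'M[K]_(m, n) => Num.sqrt (mxdot (strain Y) (strain Y)));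
  last by apply/funext => Y; rewrite /strain_norm frobE.
have d2_gt0 : 0 < d ^+ 2 by rewrite exprn_gt0.
apply: (bdd_lipschitz_sqrt d2_gt0).
  move=> Y /s_ge; rewrite /strain_norm frobE => dY.
  by rewrite -(sqr_sqrtr (mxdot_self_ge0 _)) ler_pXn2r ?nnegrE ?sqrtr_ge0 ?(ltW d_gt0).
exact: lip_mxdot.
Qed.

Let lip_strain_norm_inv : lip (fun Y => (strain_norm Y)^-1).
Proof. exact: bdd_lipschitzV d_gt0 s_ge lip_strain_norm. Qed.

Let lip_dstrain_norm v : lip (fun Y => dstrain_norm Y v).
Proof. exact: bdd_lipschitzM (lip_mxdot lip_strain (lip_dstrain v)) lip_strain_norm_inv. Qed.

Let lip_d2strain_norm u v : lip (fun Y => d2strain_norm Y u v).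
Proof.
apply: bdd_lipschitzM lip_strain_norm_inv.
apply: bdd_lipschitzB; last exact: bdd_lipschitzM (lip_dstrain_norm u) (lip_dstrain_norm v).
apply: bdd_lipschitzD; first exact: lip_mxdot (lip_dstrain u) (lip_dstrain v).
by apply: lip_mxdot => // i j; exact: bdd_lipschitz_cst.
Qed.

Let lip_psi_inv : lip (fun Y => (psi b c (strain_norm Y))^-1).
Proof.
have sb0 : 0 < Num.sqrt b by rewrite sqrtr_gt0.
apply: (bdd_lipschitzV sb0) => [Y _|]; first by rewrite ler_wsqrtr // lerDr sqr_ge0.
apply: (bdd_lipschitz_sqrt b_gt0) => [Y _|]; first by rewrite lerDr sqr_ge0.
apply: bdd_lipschitzD; last exact: bdd_lipschitz_cst.
by apply: bdd_lipschitzX; apply: bdd_lipschitzD lip_strain_norm (bdd_lipschitz_cst _).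
Qed.

Lemma bdd_lipschitz_hess_form u v :
  bdd_lipschitz (fun Y Z => frob (Y - Z))
    [set Y | d < strain_norm Y /\ frob (Y - X) < 1] (fun Y => hess_form b c Y u v).
Proof.
have lip_s_c : lip (fun Y => strain_norm Y + c).
  exact: bdd_lipschitzD lip_strain_norm (bdd_lipschitz_cst _).
have lip_d2psi : lip (fun Y => d2psi b c (strain_norm Y)).
  rewrite (_ : (fun Y => _) = fun Y : 'M[K]_(m, n) => b * (psi b c (strain_norm Y))^-1 ^+ 3);
    last by apply/funext => Y; rewrite /d2psi exprVn.
  exact: bdd_lipschitzM (bdd_lipschitz_cst _) (bdd_lipschitzX 3 lip_psi_inv).
apply: bdd_lipschitzD.
  exact: bdd_lipschitzM (bdd_lipschitzM lip_d2psi (lip_dstrain_norm u)) (lip_dstrain_norm v).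
exact: bdd_lipschitzM (bdd_lipschitzM lip_s_c lip_psi_inv) (lip_d2strain_norm u v).
Qed.

End HessianFormLipschitz.

Section QuadraticForms.
Context {K : realType} {n : nat}.
Implicit Types (A : 'M[K]_n) (v : 'rV[K]_n).

Lemma quad_formE A v :
  (v *m A *m v^T) 0 0 = \sum_(j < n) \sum_(i < n) v 0 i * A i j * v 0 j.
Proof. by rewrite mxE; apply: eq_bigr => j _; rewrite !mxE mulr_suml. Qed.

Lemma quad_form_scalar (L : K) v :
  (v *m L%:M *m v^T) 0 0 = L * \sum_(j < n) v 0 j ^+ 2.
Proof.
rewrite mul_mx_scalar -scalemxAl mxE; congr (_ * _).
by rewrite mxE; apply: eq_bigr => j _; rewrite !mxE expr2.
Qed.

Lemma norm_quad_form_le {A} {M : K} v : (forall i j, `|A i j| <= M) ->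
  `|(v *m A *m v^T) 0 0| <= M * n%:R * \sum_(j < n) v 0 j ^+ 2.
Proof.
move=> AM; rewrite quad_formE.
have term_le i j : `|v 0 i * A i j * v 0 j| <= M / 2 * (v 0 i ^+ 2 + v 0 j ^+ 2).
  (* 2 |x y| <= x^2 + y^2 *)
  have M0 : 0 <= M := le_trans (normr_ge0 _) (AM i j).
  have h : `|A i j| * `|v 0 i| * `|v 0 j| <= M * (`|v 0 i| * `|v 0 j|).
    by rewrite -mulrA ler_wpM2r ?mulr_ge0.
  rewrite !normrM [`|v 0 i| * _]mulrC; apply: le_trans h _.
  rewrite -[v 0 i ^+ 2]real_normK ?num_real // -[v 0 j ^+ 2]real_normK ?num_real //.
  have := sqr_ge0 (`|v 0 i| - `|v 0 j|); move: `|v 0 i| `|v 0 j| => x y sq0.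
  by rewrite -mulrA ler_wpM2l //; rewrite sqrrB in sq0; lra.
have double_sum : \sum_(j < n) \sum_(i < n) (v 0 i ^+ 2 + v 0 j ^+ 2)
    = 2 * n%:R * \sum_(j < n) v 0 j ^+ 2.
  under eq_bigr do rewrite big_split /= sumr_const card_ord.
  by rewrite big_split /= sumr_const card_ord sumrMnl -mulr_natr; ring.
apply: le_trans (ler_norm_sum _ _ _) _.
apply: le_trans (ler_sum _ (fun j _ => ler_norm_sum _ _ _)) _.
apply: le_trans (ler_sum _ (fun j _ => ler_sum _ (fun i _ => term_le i j))) _.
under eq_bigr do rewrite -mulr_sumr.
rewrite -mulr_sumr double_sum; set S := \sum_(j < n) _.
by rewrite le_eqVlt; apply/orP; left; apply/eqP; field.
Qed.

Lemma loewner_entry_bound A (M : K) : (forall i j, `|A i j| <= M) ->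
  loewner_le (- (M * n%:R)%:M) A /\ loewner_le A ((M * n%:R)%:M).
Proof.
move=> AM; split => v.
- rewrite opprK mulmxDr mulmxDl mxE quad_form_scalar.
  by have /ler_normlP[] := norm_quad_form_le v AM; lra.
- rewrite mulmxBr mulmxBl mxE quad_form_scalar mxE.
  by have /ler_normlP[] := norm_quad_form_le v AM; lra.
Qed.

End QuadraticForms.

Lemma frob_lipschitz_entrywise {K : realType} {T : Type} {p q : nat}
    (dist : T -> T -> K) (A : set T) (H : T -> 'M[K]_(p, q)) :
  (forall i j, exists M, forall x y, A x -> A y -> `|H x i j - H y i j| <= M * dist x y) ->
  exists L, forall x y, A x -> A y -> frob (H x - H y) <= L * dist x y.
Proof.
move=> HM; have /fin_all_exists[M entryM] ij := HM ij.1 ij.2.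
exists (\sum_(i < p) \sum_(j < q) M (i, j)) => x y Ax Ay.
apply: le_trans (frob_le_sum_norm _) _; rewrite mulr_suml; apply: ler_sum => i _.
by rewrite mulr_suml; apply: ler_sum => j _; rewrite !mxE; exact: entryM (i, j) x y Ax Ay.
Qed.

Section P5Properties.
Context {K : realType}.
Variables (b c d : K).
Hypotheses (b_gt0 : 0 < b) (d_gt0 : 0 < d).

Lemma P5E : P5 b c = fun Y => psi b c (strain_norm Y).
Proof. by []. Qed.

Lemma near_Uset X : Uset d X -> \forall Y \near X, Uset d Y.
Proof.
move=> UX; have s0 : 0 < strain_norm X := lt_trans d_gt0 UX.
have cont : strain_norm @ X --> strain_norm X :=
  differentiable_continuous (differentiable_strain_norm X s0).
exact: filterS (cvgr_gt _ cont _ UX).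
Qed.

Lemma open_Uset : open (Uset d).
Proof. by rewrite openE => X /near_Uset. Qed.

Lemma near_derive_P5 X v : Uset d X ->
  \forall Y \near X, dpsi b c (strain_norm Y) * dstrain_norm Y v = 'D_v (P5 b c) Y.
Proof.
move=> /near_Uset; apply: filterS => Y UY; have s0 : 0 < strain_norm Y := lt_trans d_gt0 UY.
by rewrite P5E (@derive_val _ _ _ _ _ _ _ (is_derive_psi_strain_norm b c b_gt0 Y v s0)).
Qed.

Lemma twice_differentiable_P5 : twice_differentiable_on (Uset d) (P5 b c).
Proof.
move=> X UX; have s0 : 0 < strain_norm X := lt_trans d_gt0 UX; split.
  exact: differentiable_psi_strain_norm.
move=> k; apply: differentiable_near_eq (near_derive_P5 X (ebasis k) UX) _.
exact: differentiable_derive_psi_strain_norm.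
Qed.

Lemma hessian_P5E X : Uset d X ->
  hessian (P5 b c) X = \matrix_(i, j) hess_form b c X (ebasis i) (ebasis j).
Proof.
move=> UX; have s0 : 0 < strain_norm X := lt_trans d_gt0 UX.
apply/matrixP => i j; rewrite !mxE -(near_eq_derive _ (near_derive_P5 X (ebasis j) UX)).
exact: @derive_val _ _ _ _ _ _ _ (is_derive2_psi_strain_norm b c b_gt0 X _ _ s0).
Qed.

Lemma unit_entries_ebasis k : unit_entries (@ebasis K k).
Proof. by move=> i j; rewrite !mxE; case: (_ && _); rewrite ?normr1 ?normr0 ?ler01. Qed.

Lemma hessian_P5_entry_bound :
  exists M, forall X, Uset d X -> forall i j, `|hessian (P5 b c) X i j| <= M.
Proof.
have [M HM] := @hess_form_bound K 3 3 b c d b_gt0 d_gt0.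
exists M => X UX i j; rewrite hessian_P5E // mxE.
exact: HM (unit_entries_ebasis i) (unit_entries_ebasis j) UX.
Qed.

Lemma hessian_P5_lipschitz : hessian_locally_lipschitz_on (Uset d) (P5 b c).
Proof.
move=> X UX; pose A := [set Y | d < strain_norm Y /\ frob (Y - X) < 1].
pose H Y : 'M[K]_(3 * 3) := \matrix_(i, j) hess_form b c Y (ebasis i) (ebasis j).
have entry_lip i j : exists M, forall Y Z, A Y -> A Z ->
    `|H Y i j - H Z i j| <= M * frob (Y - Z).
  have [_ [M HM]] := bdd_lipschitz_hess_form b c d X b_gt0 d_gt0 (ebasis i) (ebasis j).
  by exists M => Y Z AY AZ; rewrite !mxE; apply: HM.
have [L HL] := frob_lipschitz_entrywise _ _ _ entry_lip.
exists 1, L; split => // Y Z UY UZ YX ZX.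
by rewrite !hessian_P5E //; apply: HL.
Qed.

End P5Properties.

Theorem lemma11 (K : realType) (b c d : K) (hb : 0 < b) (hd : 0 < d) :
  open (Uset d) /\
  twice_differentiable_on (Uset d) (P5 b c) /\
  hessian_locally_lipschitz_on (Uset d) (P5 b c) /\
  exists L : K, forall X : 'M[K]_3, Uset d X ->
    loewner_le (- (L%:M)) (hessian (P5 b c) X) /\
    loewner_le (hessian (P5 b c) X) (L%:M).
Proof.
have [M HM] := hessian_P5_entry_bound b c d hb hd.
split; first exact: open_Uset.
split; first exact: twice_differentiable_P5.
split; first exact: hessian_P5_lipschitz.
by exists (M * (3 * 3)%:R) => X UX; apply: loewner_entry_bound; exact: HM.
Qed.
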